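(* Let $(a_n)_{n\in\mathbb Z}$ be a complex sequence with $a_n=0$ for $n<0$ and $a_0=1$, and let $a$ be a nonzero complex number. For integers $k$ and $N\ge 0$ put $v_k(N)=\det\bigl(a_{i+j+k-N}\bigr)_{i,j=0}^{N-1}$. Suppose that $v_2(n)=(-1)^{\binom{n-1}{2}}\,a\,C_{n-1}$ for all $n\ge 1$. Then for all integers $n\ge 0$ and $k\ge 1$, $$v_k(n+k)=(-1)^{\binom{n+1}{2}}\,a^{k-1}\,p_{n+1}(k-1).$$
   Context: $C_n=\frac{1}{n+1}\binom{2n}{n}$ denotes the $n$-th Catalan number. The determinant of a $0\times0$ matrix is $1$. For integers $m,n\ge 0$, $p_m(n)=\prod_{1\le i\le j\le m-1}\frac{2n+i+j}{i+j}$ (empty product $=1$). Note $v_k(N)$ is the determinant of the $N\times N$ Hankel matrix whose first row is $(a_{k-N},a_{k-N+1},\dots,a_{k-1})$. *)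

From mathcomp Require Import all_boot all_order all_algebra.
From mathcomp Require Import complex.
From mathcomp Require Import reals Rstruct.
Set Implicit Arguments. Unset Strict Implicit. Unset Printing Implicit Defensive.
Import Order.TTheory GRing.Theory Num.Theory.
Local Open Scope ring_scope.

Notation CC := (complex Rdefinitions.R).

Definition catalan (n : nat) : nat := 'C(n.*2, n) %/ n.+1.

Definition pmn (m n : nat) : CC :=
  \prod_(1 <= i < m) \prod_(i <= j < m)
     ((n.*2 + i + j)%:R / (i + j)%:R : CC).

Definition hankel_v (a : int -> CC) (k : int) (N : nat) : CC :=
  \det (\matrix_(i < N, j < N) a ((i : nat)%:Z + (j : nat)%:Z + k - N%:Z)%R).

(* Write w(k, n) := v_{k+1}(n+k+1) and let c be the constant with
   v_2(n) = (-1)^C(n-1,2) c C_{n-1}.  The theorem says that w(k, n) equals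
   h(n, k) := (-1)^C(n+1,2) c^k p_{n+1}(k).  The proof is an induction on k
   that determines the row k+2 of w from the rows k and k+1, using Dodgson
   condensation, i.e. the Desnanot-Jacobi identity (M^I_J denotes M with the
   rows I and the columns J deleted)

     det M^{1}_{1} det M^{N+2}_{N+2} - det M^{1}_{N+2} det M^{N+2}_{1}
        = det M det M^{1,N+2}_{1,N+2}            (M of size N+2, det M <> 0).

   Also p_m(0) = 1 and
      p_m(1) = C_m.
   4. Hence h satisfies the recurrence of w and agrees with w on the rows
      k = 0 (by 2.) and k = 1 (the hypothesis on v_2), and the theorem
      follows by induction since h never vanishes. *)

From mathcomp Require Import all_boot all_order all_algebra.
From mathcomp Require Import complex reals Rstruct.
From mathcomp Require Import ring zify.
Set Implicit Arguments. Unset Strict Implicit. Unset Printing Implicit Defensive.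
Import Order.TTheory GRing.Theory Num.Theory.
Local Open Scope ring_scope.

Lemma lift0_eq0 n (i : 'I_n) : (lift ord0 i == ord0) = false.
Proof. by rewrite -val_eqE. Qed.

Lemma lift0_eq_max n (i : 'I_n.+1) : (lift ord0 i == ord_max :> 'I_n.+2) = (i == ord_max).
Proof. by rewrite -!val_eqE. Qed.

Lemma lift_max_eq_max n (i : 'I_n) : (lift ord_max i == ord_max :> 'I_n.+1) = false.
Proof. by rewrite -val_eqE /= /bump leqNgt ltn_ord (ltn_eqF (ltn_ord i)). Qed.

Lemma lift_max_eq0 n (i : 'I_n.+1) : (lift ord_max i == ord0 :> 'I_n.+2) = (i == ord0).
Proof. by rewrite -!val_eqE /= /bump leqNgt ltn_ord. Qed.

Lemma lift0_max n : lift ord0 ord_max = ord_max :> 'I_n.+2.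
Proof. exact: val_inj. Qed.

Lemma minorE (R : Type) m n (A : 'M[R]_(m.+1, n.+1)) i0 j0 i j :
  row' i0 (col' j0 A) i j = A (lift i0 i) (lift j0 j).
Proof. by rewrite !mxE. Qed.

Lemma expand_det_row1 (R : comPzRingType) n (A : 'M[R]_n) i j :
  (forall k, k != j -> A i k = 0) -> \det A = A i j * cofactor A i j.
Proof.
move=> Ai0; rewrite (expand_det_row _ i) (bigD1 j) //= big1 ?addr0 // => k /Ai0->.
exact: mul0r.
Qed.

Lemma expand_det_col1 (R : comPzRingType) n (A : 'M[R]_n) i j :
  (forall k, k != i -> A k j = 0) -> \det A = A i j * cofactor A i j.
Proof.
move=> A0j; rewrite (expand_det_col _ j) (bigD1 i) //= big1 ?addr0 // => k /A0j->.
exact: mul0r.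
Qed.

Section DesnanotJacobi.
Variables (F : fieldType) (N : nat).
Implicit Type M : 'M[F]_N.+2.

Definition inner_mx M : 'M[F]_N := row' ord_max (col' ord_max (row' ord0 (col' ord0 M))).

(* Left multiplication by it turns the first and last rows of M into
   det M times unit vectors and leaves the other rows alone. *)
Definition adj_frame M : 'M[F]_N.+2 := \matrix_(i, j)
  (if i == ord0 then \adj M ord0 j
   else if i == ord_max then \adj M ord_max j else (i == j)%:R).

Lemma adj_frame_mulE M i j : (adj_frame M *m M) i j =
  if i == ord0 then \det M * (ord0 == j)%:R
  else if i == ord_max then \det M * (ord_max == j)%:R else M i j.
Proof.
have adjM i0 : \sum_k \adj M i0 k * M k j = \det M * (i0 == j)%:R.
  by have := congr1 (fun X : 'M[F]_N.+2 => X i0 j) (mul_adj_mx M); rewrite !mxE mulr_natr.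
rewrite mxE; case: ifP => [/eqP-> | i_neq0].
  by rewrite -adjM; apply: eq_bigr => k _; rewrite mxE eqxx.
case: ifP => [/eqP-> | i_neqL].
  by rewrite -adjM; apply: eq_bigr => k _; rewrite mxE eqxx.
rewrite (bigD1 i) //= big1 => [|k k_neq_i]; rewrite mxE i_neq0 i_neqL.
  by rewrite eqxx mul1r addr0.
by rewrite eq_sym (negbTE k_neq_i) mul0r.
Qed.

Lemma det_adj_frame_mul M :
  \det (adj_frame M *m M) = \det M ^+ 2 * \det (inner_mx M).
Proof.
have sign_even k : (-1) ^+ (k + k) = 1 :> F by rewrite -signr_odd addnn odd_double.
have := adj_frame_mulE M; set P := adj_frame M *m M => PE.
rewrite (expand_det_row1 (i := ord0) (j := ord0)) => [|k k_neq0]; last first.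
  by rewrite PE eqxx eq_sym (negbTE k_neq0) mulr0.
rewrite PE eqxx mulr1 /cofactor sign_even mul1r expr2 -mulrA.
congr (_ * _).
rewrite (expand_det_row1 (i := ord_max) (j := ord_max)) => [|k k_neqL]; last first.
  rewrite minorE PE lift0_eq0 lift0_eq_max eqxx [ord_max == _]eq_sym lift0_eq_max.
  by rewrite (negbTE k_neqL) mulr0.
rewrite minorE PE lift0_eq0 lift0_eq_max eqxx [ord_max == _]eq_sym lift0_eq_max eqxx.
rewrite mulr1 /cofactor sign_even mul1r.
congr (_ * \det _); apply/matrixP => i j.
by rewrite /inner_mx !minorE PE lift0_eq0 lift0_eq_max lift_max_eq_max.
Qed.

(* The two cofactors of adj_frame M along its first column: the first is the
   determinant of a lower-triangular matrix with diagonal 1, ..., 1, adj M at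
   (last, last); the second that of the first row of adj M on top of a shifted
   identity. *)
Lemma cofactor_adj_frame00 M : cofactor (adj_frame M) ord0 ord0 = \adj M ord_max ord_max.
Proof.
have BE i j : row' ord0 (col' ord0 (adj_frame M)) i j =
    if i == ord_max then \adj M ord_max (lift ord0 j) else (i == j)%:R.
  by rewrite minorE mxE lift0_eq0 lift0_eq_max (inj_eq (@lift_inj _ ord0)).
rewrite /cofactor expr0 mul1r det_trig; last first.
  apply/is_trig_mxP => i j lt_ij; rewrite BE -!val_eqE /= (ltn_eqF lt_ij).
  by rewrite ltn_eqF // (leq_trans lt_ij (leq_ord j)).
rewrite big_ord_recr /= big1 => [|i _]; last first.
  by rewrite BE -val_eqE /= (ltn_eqF (ltn_ord i)) eqxx.
by rewrite BE eqxx lift0_max mul1r.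
Qed.

Lemma cofactor_adj_frameL0 M : cofactor (adj_frame M) ord_max ord0 = - \adj M ord0 ord_max.
Proof.
set E := row' ord_max (col' ord0 (adj_frame M)).
have EE k j : E k j =
    if k == ord0 then \adj M ord0 (lift ord0 j) else (k == j.+1 :> nat)%:R.
  rewrite minorE mxE lift_max_eq0 lift_max_eq_max; case: ifP => // _.
  by rewrite -val_eqE /= /bump leqNgt (ltn_ord k) leq0n add0n add1n.
rewrite /cofactor (expand_det_col1 (i := ord0) (j := ord_max)) => [|k k_neq0]; last first.
  by rewrite EE (negbTE k_neq0) /= (ltn_eqF (ltn_ord k)).
rewrite EE eqxx lift0_max /cofactor.
have -> : row' ord0 (col' ord_max E) = 1%:M.
  by apply/matrixP => i j; rewrite minorE EE lift0_eq0 !mxE lift0 lift_max.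
rewrite det1 mulr1 /= addn0 exprS mulN1r mulNr.
by rewrite mulrCA -expr2 sqrr_sign mulr1.
Qed.

Lemma det_adj_frame M : \det (adj_frame M) =
  \adj M ord0 ord0 * \adj M ord_max ord_max - \adj M ord_max ord0 * \adj M ord0 ord_max.
Proof.
have BE i j : adj_frame M i j = if i == ord0 then \adj M ord0 j
    else if i == ord_max then \adj M ord_max j else (i == j)%:R by rewrite mxE.
rewrite (expand_det_col _ ord0) (bigD1 ord0) //= (bigD1 ord_max) //= big1 => [|i].
  by rewrite addr0 cofactor_adj_frame00 cofactor_adj_frameL0 !BE !eqxx mulrN.
by case/andP=> i_neq0 i_neqL; rewrite BE (negbTE i_neq0) (negbTE i_neqL) mul0r.
Qed.

(* The Desnanot-Jacobi identity: compare det (adj_frame M *m M) computed by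
   det_adj_frame_mul and by multiplicativity, and cancel det M. *)
Theorem desnanot_jacobi M : \det M != 0 ->
  \det (row' ord0 (col' ord0 M)) * \det (row' ord_max (col' ord_max M))
  - \det (row' ord0 (col' ord_max M)) * \det (row' ord_max (col' ord0 M))
  = \det M * \det (inner_mx M).
Proof.
move=> detM_neq0; apply: (mulfI detM_neq0).
rewrite mulrA -expr2 -det_adj_frame_mul det_mulmx det_adj_frame mulrC.
congr (_ * _); rewrite !mxE /cofactor /= !addn0 expr0 !mul1r.
by rewrite -signr_odd addnn odd_double mul1r mulrACA -expr2 sqrr_sign mul1r.
Qed.
End DesnanotJacobi.

Section Hankel.
Variable a : int -> CC.

Definition hankel_mx (k : int) (N : nat) : 'M[CC]_N :=
  \matrix_(i < N, j < N) a ((i : nat)%:Z + (j : nat)%:Z + k - N%:Z).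

Lemma hankel_mx_minor00 k N :
  row' ord0 (col' ord0 (hankel_mx k N.+1)) = hankel_mx (k + 1) N.
Proof. by apply/matrixP => i j; rewrite !mxE !lift0; congr (a _); lia. Qed.

Lemma hankel_mx_minorLL k N :
  row' ord_max (col' ord_max (hankel_mx k N.+1)) = hankel_mx (k - 1) N.
Proof. by apply/matrixP => i j; rewrite !mxE !lift_max; congr (a _); lia. Qed.

Lemma hankel_mx_minor0L k N :
  row' ord0 (col' ord_max (hankel_mx k N.+1)) = hankel_mx k N.
Proof. by apply/matrixP => i j; rewrite !mxE lift0 lift_max; congr (a _); lia. Qed.

Lemma hankel_mx_minorL0 k N :
  row' ord_max (col' ord0 (hankel_mx k N.+1)) = hankel_mx k N.
Proof. by apply/matrixP => i j; rewrite !mxE lift0 lift_max; congr (a _); lia. Qed.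

Lemma hankel_condensation k N : hankel_v a k N.+2 != 0 ->
  hankel_v a (k + 1) N.+1 * hankel_v a (k - 1) N.+1 - hankel_v a k N.+1 ^+ 2
  = hankel_v a k N.+2 * hankel_v a k N.
Proof.
move=> /(@desnanot_jacobi _ _ (hankel_mx k N.+2)).
rewrite /inner_mx hankel_mx_minor00 hankel_mx_minorLL hankel_mx_minor0L.
by rewrite hankel_mx_minorL0 hankel_mx_minorLL addrK expr2.
Qed.

Definition hankel_w (k n : nat) : CC := hankel_v a k.+1%:Z (n + k.+1).

Lemma hankel_w_condensation k n : hankel_w k.+1 n.+2 != 0 ->
  hankel_w k.+2 n * hankel_w k n.+2 - hankel_w k.+1 n.+1 ^+ 2
  = hankel_w k.+1 n.+2 * hankel_w k.+1 n.
Proof.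
rewrite /hankel_w => nz.
have := hankel_condensation (k := k.+2%:Z) (N := (n + k.+2)%N) nz.
have -> : k.+2%:Z + 1 = k.+3 by lia.
have -> : k.+2%:Z - 1 = k.+1 by lia.
by rewrite !(addSn, addnS).
Qed.

Hypotheses (ha_neg : forall n : int, n < 0 -> a n = 0) (ha0 : a 0 = 1).

(* For a_0 = 1 and a_n = 0 (n < 0) the matrix of v_1(n) is unitriangular up
   to reversing the order of its columns. *)
Lemma hankel_v1 n : hankel_v a 1 n = (-1) ^+ 'C(n, 2).
Proof.
elim: n => [|n IHn]; first by rewrite /hankel_v det_mx00.
rewrite -[hankel_v a 1 n.+1]/(\det (hankel_mx 1 n.+1)).
rewrite (expand_det_row1 (i := ord0) (j := ord_max)) => [|j j_neqL]; last first.
  have j_lt_n : (j < n)%N by rewrite ltn_neqAle -ltnS ltn_ord andbT.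
  by rewrite mxE ha_neg ?mul0r //=; lia.
rewrite mxE /cofactor hankel_mx_minor0L -/(hankel_v a 1 n) IHn /=.
rewrite (_ : _ + _ + 1 - _ = 0); last by lia.
by rewrite ha0 mul1r add0n binS bin1 exprD mulrC.
Qed.
End Hankel.

Ltac natr_neq0 := rewrite -[1 : CC]/(1%:R) -!natrD !pnatr_eq0; lia.

Definition factC (t : nat) : CC := (t`!)%:R.

Lemma factC_neq0 t : factC t != 0.
Proof. by rewrite pnatr_eq0 -lt0n fact_gt0. Qed.

Lemma factCS t : factC t.+1 = t.+1%:R * factC t.
Proof. by rewrite /factC factS natrM. Qed.

Lemma prod_consecutive s t :
  \prod_(1 <= i < t.+1) ((s + i)%:R : CC) = factC (s + t) / factC s.
Proof.
elim: t => [|t IHt]; first by rewrite big_geq // addn0 divff ?factC_neq0.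
by rewrite big_nat_recr //= IHt addnS factCS mulrAC [factC _ * _]mulrC.
Qed.

(* The ratio p_{m+1}(y) / p_m(y), see pmn_succ. *)
Definition pmn_ratio (m y : nat) : CC :=
  factC (y.*2 + m.*2) * factC m / (factC (y.*2 + m) * factC m.*2).

Lemma pmn_succ_prod m y : pmn m.+1 y =
  pmn m y * \prod_(1 <= i < m.+1) ((y.*2 + i + m)%:R / (i + m)%:R).
Proof.
rewrite /pmn; under eq_big_nat => i /andP[_ lt_i_m1] do rewrite big_nat_recr //=.
rewrite big_split /=; congr (_ * _).
case: m => [|m]; first by rewrite !big_geq.
by rewrite big_nat_recr //= [X in _ * X]big_geq // mulr1.
Qed.

Lemma pmn_succ m y : pmn m.+1 y = pmn m y * pmn_ratio m y.
Proof.
rewrite pmn_succ_prod prodf_div; congr (_ * _).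
under eq_bigr do rewrite addnAC.
under [X in _ / X]eq_bigr do rewrite addnC.
by rewrite !prod_consecutive -addnA !addnn invf_div mulf_div.
Qed.

(* The hypergeometric shifts of pmn_ratio: pmn_ratio m (y+1) / pmn_ratio m y
   and pmn_ratio (m+1) y / pmn_ratio m y. *)
Definition col_shift_y (m y : nat) : CC :=
  ((y.*2 + m.*2).+1 * (y.*2 + m.*2).+2)%:R / ((y.*2 + m).+1 * (y.*2 + m).+2)%:R.

Definition col_shift_m (m y : nat) : CC :=
  ((y.*2 + m.*2).+1 * (y.*2 + m.*2).+2 * m.+1)%:R
  / ((y.*2 + m).+1 * (m.*2).+1 * (m.*2).+2)%:R.

Lemma pmn_ratio_succ_y m y : pmn_ratio m y.+1 = pmn_ratio m y * col_shift_y m y.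
Proof.
rewrite /pmn_ratio /col_shift_y doubleS !addSn !factCS.
by field; rewrite ?factC_neq0 /=; natr_neq0.
Qed.

Lemma pmn_ratio_succ_m m y : pmn_ratio m.+1 y = pmn_ratio m y * col_shift_m m y.
Proof.
rewrite /pmn_ratio /col_shift_m doubleS !addnS !factCS.
by field; rewrite ?factC_neq0 /=; natr_neq0.
Qed.

Lemma pmn0 y : pmn 0 y = 1.
Proof. by rewrite /pmn big_geq. Qed.

Lemma pmn1 y : pmn 1 y = 1.
Proof. by rewrite /pmn big_geq. Qed.

Lemma pmn_neq0 m y : pmn m y != 0.
Proof.
elim: m => [|m IHm]; first by rewrite pmn0 oner_neq0.
by rewrite pmn_succ mulf_neq0 // mulf_neq0 ?invr_neq0 ?mulf_neq0 ?factC_neq0.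
Qed.

Lemma pmn_y0 m : pmn m 0 = 1.
Proof.
elim: m => [|m IHm]; first exact: pmn0.
rewrite pmn_succ IHm mul1r /pmn_ratio double0 !add0n [factC m.*2 * _]mulrC.
by rewrite divff // mulf_neq0 ?factC_neq0.
Qed.

(* C_m = (2m)! / (m! (m+1)!), from (m+1) C_m = binom(2m, m). *)
Lemma catalan_fact m : (catalan m)%:R = factC m.*2 / (factC m * factC m.+1).
Proof.
have bin_split : 'C(m.*2, m) = (m.+1 * ('C(m.*2, m) - 'C(m.*2, m.+1)))%N.
  by rewrite mulnBr mul_bin_left -addnn addnK mulSn addnK.
have catalan_mul : (catalan m * m.+1 = 'C(m.*2, m))%N.
  by rewrite /catalan {1}bin_split mulKn // mulnC -bin_split.
have bin_mid : ('C(m.*2, m) * (m`! * m`!) = (m.*2)`!)%N.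
  by have := @bin_fact m.*2 m; rewrite -addnn addnK leq_addr; apply.
rewrite /factC -bin_mid -catalan_mul factS !natrM.
by field; rewrite -/(factC m) factC_neq0 /=; natr_neq0.
Qed.

Lemma pmn_catalan m : pmn m 1 = (catalan m)%:R.
Proof.
elim: m => [|m IHm]; first by rewrite pmn0 catalan_fact /factC /= mulr1 divr1.
rewrite pmn_succ IHm !catalan_fact /pmn_ratio doubleS !(addSn, add2n) !factCS.
by field; rewrite ?factC_neq0 /=; natr_neq0.
Qed.

(* The ratio p_{m+1}(y+2) p_{m+1}(y) / p_{m+1}(y+1)^2, see pmn_log_concave. *)
Definition log_ratio (m y : nat) : CC :=
  ((y.*2 + m.*2 + 3) * (y.*2 + m.*2 + 4) * (y.*2 + 2) * (y.*2 + 3))%:R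
  / ((y.*2 + m + 2) * (y.*2 + m + 3) * (y.*2 + m + 3) * (y.*2 + m + 4))%:R.

Lemma log_ratio_succ m y :
  log_ratio m y * col_shift_y m.+1 y.+1 = col_shift_y m.+1 y * log_ratio m.+1 y.
Proof. by rewrite /log_ratio /col_shift_y -!addnn; field; natr_neq0. Qed.

Lemma log_ratio_col m y :
  log_ratio m y * col_shift_m m.+1 y = col_shift_y m.+1 y ^+ 2 * (col_shift_m m.+1 y.+1 - 1).
Proof. by rewrite /log_ratio /col_shift_y /col_shift_m -!addnn; field; natr_neq0. Qed.

Lemma pmn_log_concave m y :
  pmn m.+1 y.+2 * pmn m.+1 y = pmn m.+1 y.+1 ^+ 2 * log_ratio m y.
Proof.
elim: m => [|m IHm].
  by rewrite !pmn1 expr1n !mul1r /log_ratio double0 !addn0; field; natr_neq0.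
rewrite !(pmn_succ m.+1) !pmn_ratio_succ_y.
set r := pmn_ratio m.+1 y.
transitivity (pmn m.+1 y.+2 * pmn m.+1 y *
              (r ^+ 2 * col_shift_y m.+1 y * col_shift_y m.+1 y.+1)); first by ring.
rewrite IHm.
transitivity (pmn m.+1 y.+1 ^+ 2 * r ^+ 2 * col_shift_y m.+1 y *
              (log_ratio m y * col_shift_y m.+1 y.+1)); first by ring.
by rewrite log_ratio_succ; ring.
Qed.

(* The products p_m(y) satisfy the condensation recurrence of the v_k(N). *)
Lemma pmn_rec m y :
  pmn m.+3 y * pmn m.+1 y.+2 = pmn m.+3 y.+1 * pmn m.+1 y.+1 - pmn m.+2 y.+1 ^+ 2.
Proof.
rewrite !(pmn_succ m.+2) !(pmn_succ m.+1) !(pmn_ratio_succ_m m.+1).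
rewrite !(pmn_ratio_succ_y m.+1).
set r := pmn_ratio m.+1 y.
transitivity (pmn m.+1 y.+2 * pmn m.+1 y * (r ^+ 2 * col_shift_m m.+1 y)); first by ring.
rewrite pmn_log_concave.
transitivity (pmn m.+1 y.+1 ^+ 2 * r ^+ 2 * (log_ratio m y * col_shift_m m.+1 y)).
  by ring.
by rewrite log_ratio_col; ring.
Qed.

(* (-1)^C(n+1,2) changes sign when n increases by 2,
   as C(n+3,2) = C(n+1,2) + 2n + 3. *)
Lemma sign_bin2_shift (R : pzRingType) n :
  (-1) ^+ 'C(n.+3, 2) = - (-1) ^+ 'C(n.+1, 2) :> R.
Proof.
rewrite (binS n.+2 1) (binS n.+1 1) !bin1 -addnA exprD addnS exprS.
by rewrite exprD -expr2 sqrr_sign mulr1 mulrN1.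
Qed.

Section HankelCatalan.
Variables (a : int -> CC) (c : CC).

Definition hankel_closed (n k : nat) : CC := (-1) ^+ 'C(n.+1, 2) * c ^+ k * pmn n.+1 k.

Lemma hankel_closed_neq0 n k : c != 0 -> hankel_closed n k != 0.
Proof. by move=> c_neq0; rewrite !mulf_neq0 ?signr_eq0 ?expf_neq0 ?pmn_neq0. Qed.

Lemma hankel_closed_rec n k :
  hankel_closed n k.+2 * hankel_closed n.+2 k - hankel_closed n.+1 k.+1 ^+ 2
  = hankel_closed n.+2 k.+1 * hankel_closed n k.+1.
Proof.
rewrite /hankel_closed sign_bin2_shift !(exprS c).
(* [ring] does not handle symbolic exponents: generalize the signs and c^k. *)
have := pmn_rec n k; have := sqrr_sign CC 'C(n.+1, 2); have := sqrr_sign CC 'C(n.+2, 2).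
move: ((-1) ^+ 'C(n.+1, 2)) ((-1) ^+ 'C(n.+2, 2)) (c ^+ k) => s s' ck s'_sq s_sq pmn_recE.
rewrite [RHS](_ : _ = - s ^+ 2 * (c * ck) ^+ 2 * (pmn n.+3 k.+1 * pmn n.+1 k.+1));
  last by ring.
transitivity (- s ^+ 2 * (c * ck) ^+ 2 * (pmn n.+3 k * pmn n.+1 k.+2)
              - s' ^+ 2 * (c * ck) ^+ 2 * pmn n.+2 k.+1 ^+ 2); first by ring.
by rewrite s_sq s'_sq pmn_recE; ring.
Qed.

Hypotheses (ha_neg : forall n : int, n < 0 -> a n = 0) (ha0 : a 0 = 1) (hc : c != 0)
  (hv2 : forall n : nat, (1 <= n)%N ->
     hankel_v a 2 n = (-1) ^+ 'C(n.-1, 2) * c * (catalan n.-1)%:R).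

(* w = h, by induction on k carrying two consecutive rows: the rows 0 and 1
   are hankel_v1 and the hypothesis hv2, the others follow by condensation,
   cancelling the nonzero factor h(n+2, k). *)
Lemma hankel_w_closed k n : hankel_w a k n = hankel_closed n k.
Proof.
suff two_rows : forall k, (forall n, hankel_w a k n = hankel_closed n k)
                       /\ (forall n, hankel_w a k.+1 n = hankel_closed n k.+1).
  by case: (two_rows k) => ->.
elim=> [|{}k [IHk IHk1]].
  split=> {}n; rewrite /hankel_w /hankel_closed.
    by rewrite addn1 hankel_v1 // expr0 mulr1 pmn_y0 mulr1.
  by rewrite hv2 addn2 // expr1 pmn_catalan.
split=> // {}n.
have nz : hankel_w a k.+1 n.+2 != 0 by rewrite IHk1 hankel_closed_neq0.
have := hankel_w_condensation nz; rewrite !IHk1 IHk -hankel_closed_rec => /addIr.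
exact: (mulIf (hankel_closed_neq0 _ _ hc)).
Qed.
End HankelCatalan.

Theorem lemma5 (a : int -> CC) (c : CC)
  (ha_neg : forall n : int, n < 0 -> a n = 0)
  (ha0 : a 0 = 1)
  (hc : c != 0)
  (hv2 : forall n : nat, (1 <= n)%N ->
     hankel_v a 2 n = (-1) ^+ 'C(n.-1, 2) * c * (catalan n.-1)%:R) :
  forall n k : nat, (1 <= k)%N ->
    hankel_v a k%:Z (n + k) = (-1) ^+ 'C(n.+1, 2) * c ^+ k.-1 * pmn n.+1 k.-1.
Proof. by move=> n [|k] // _; exact: hankel_w_closed. Qed.
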